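(* Let $u\neq v\in V$ and let $\pi_{u,v}$ be the total causal effect of $Y_v$ on $Y_u$ in a linear structural equation model with DAG $G$. Let $\alpha\in(0,1)$ and suppose the data-dependent set of permutations $\hat\Theta(\mathbf Y,\alpha/2)$ satisfies, for every causal ordering $\theta\in\Theta(G)$, $\lim_{n\to\infty}P\big(\theta\in\hat\Theta(\mathbf Y,\alpha/2)\big)\ge 1-\alpha/2$. Suppose that for every $S\subseteq V\setminus\{u,v\}$, $C(S)$ is a data-dependent confidence interval for the coefficient of $Y_v$ in the regression of $Y_u$ onto $Y_{S\cup\{v\}}$ such that, whenever $S$ is a valid adjustment set for the effect of $v$ on $u$, $\lim_{n\to\infty}P(\pi_{u,v}\in C(S))\ge 1-\alpha/2$. Define $\mathcal S=\{\mathrm{pr}_\theta(v):\theta\in\hat\Theta(\mathbf Y,\alpha/2),\ \theta(v)<\theta(u)\}$ and let $\hat C_\alpha=\{0\}\cup\bigcup_{S\in\mathcal S}C(S)$ if $\theta(u)<\theta(v)$ for some $\theta\in\hat\Theta(\mathbf Y,\alpha/2)$, and $\hat C_\alpha=\bigcup_{S\in\mathcal S}C(S)$ otherwise. Then $\lim_{n\to\infty}P(\pi_{u,v}\in\hat C_\alpha)\ge 1-\alpha$.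
   Context: $V=[p]$ and $G=(V,E)$ is a directed acyclic graph; $\mathrm{pa}(v)$, $\mathrm{an}(v)$ denote the parents and ancestors of $v$. The random vector $Y=(Y_1,\dots,Y_p)$ follows a linear structural equation model $Y_v=\sum_{w\in\mathrm{pa}(v)}\beta_{v,w}Y_w+\varepsilon_v$ with mutually independent mean-zero errors; writing $B_{v,w}=\beta_{v,w}$ if $w\in\mathrm{pa}(v)$ and $0$ otherwise, $Y=BY+\varepsilon$, and the total causal effect of $v$ on $u$ is $\pi_{u,v}=\partial E[Y_u\mid\mathrm{do}(Y_v=y)]/\partial y=((I-B)^{-1})_{u,v}$ (in particular $\pi_{u,v}=0$ if $v\notin\mathrm{an}(u)$). A causal ordering of $G$ is a permutation $\theta$ of $V$ such that $\theta(w)<\theta(z)$ only if $z\notin\mathrm{an}(w)$; $\Theta(G)$ is the set of causal orderings, and $\mathrm{pr}_\theta(v)=\{w:\theta(w)<\theta(v)\}$. $\mathbf Y$ denotes a sample of $n$ i.i.d. copies of $Y$, and $\hat\Theta(\mathbf Y,\alpha/2)$ is any set of permutations computed from $\mathbf Y$. A set $S\subseteq V\setminus\{v\}$ is a valid adjustment set for the effect of $v$ on $u$ if the coefficient of $Y_v$ in the population least-squares regression of $Y_u$ on $Y_{S\cup\{v\}}$ equals $\pi_{u,v}$. *)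

From HB Require Import structures.
From mathcomp Require Import all_boot all_order all_algebra all_fingroup.
From mathcomp Require Import all_classical all_reals all_analysis.
Set Implicit Arguments. Unset Strict Implicit. Unset Printing Implicit Defensive.
Import Order.TTheory GRing.Theory Num.Theory.
Local Open Scope classical_set_scope.
Local Open Scope ring_scope.

(* The DAG G = (V, E) with V = 'I_p is given by an edge relation
   [E : rel 'I_p], [E w v] meaning the edge w -> v (w is a parent of v). *)

Definition ancestor (p : nat) (E : rel 'I_p) (z w : 'I_p) : bool := connect E z w.

Definition acyclic (p : nat) (E : rel 'I_p) : Prop :=
  forall w z, E w z -> ~~ connect E z w.

Definition causal_ordering (p : nat) (E : rel 'I_p) (theta : {perm 'I_p}) : Prop :=
  forall w z : 'I_p, (theta w < theta z)%N -> ~~ ancestor E z w.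

Definition pr (p : nat) (theta : {perm 'I_p}) (v : 'I_p) : {set 'I_p} :=
  [set w | (theta w < theta v)%N].

Definition total_effect (R : fieldType) (p : nat) (B : 'M[R]_p) (u v : 'I_p) : R :=
  invmx (1%:M - B) u v.

(* population covariance of Y = (I - B)^{-1} eps, with independent mean-zero
   errors of variances dvar:  Sigma = (I-B)^{-1} diag(dvar) (I-B)^{-T} *)
Definition sem_cov (R : fieldType) (p : nat) (B : 'M[R]_p) (dvar : 'I_p -> R)
  : 'M[R]_p :=
  invmx (1%:M - B) *m diag_mx (\row_j dvar j) *m (invmx (1%:M - B))^T.

(* population mean squared error E[(Y_u - sum_w c_w Y_w)^2] of the linear
   predictor with coefficient vector c, written through the covariance. *)
Definition pop_mse (R : fieldType) (p : nat) (Sigma : 'M[R]_p) (u : 'I_p)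
  (c : 'I_p -> R) : R :=
  \sum_(i < p) \sum_(j < p)
     ((i == u)%:R - c i) * Sigma i j * ((j == u)%:R - c j).

Definition pop_ls (R : realFieldType) (p : nat) (Sigma : 'M[R]_p) (u : 'I_p)
  (T : {set 'I_p}) (b : 'I_p -> R) : Prop :=
  (forall w, w \notin T -> b w = 0) /\
  (forall c : 'I_p -> R, (forall w, w \notin T -> c w = 0) ->
     pop_mse Sigma u b <= pop_mse Sigma u c).

Definition valid_adjustment (R : realFieldType) (p : nat) (B : 'M[R]_p)
  (dvar : 'I_p -> R) (u v : 'I_p) (S : {set 'I_p}) : Prop :=
  v \notin S /\
  forall b, pop_ls (sem_cov B dvar) u (v |: S) b -> b v = total_effect B u v.

Definition mutually_independent d (Omega : measurableType d) (R : realType)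
  (P : probability Omega R) (I : eqType) (X : I -> Omega -> R) : Prop :=
  (forall i, measurable_fun setT (X i)) /\
  forall (J : seq I) (A : I -> set R), uniq J -> (forall i, measurable (A i)) ->
    P (\big[setI/setT]_(i <- J) (X i @^-1` A i)) =
    (\prod_(i <- J) P (X i @^-1` A i))%E.

From HB Require Import structures.
From mathcomp Require Import all_boot all_order all_algebra all_fingroup.
From mathcomp Require Import all_classical all_reals all_analysis.
From mathcomp Require Import zify ring lra.
Import Order.TTheory GRing.Theory Num.Theory.
Set Implicit Arguments. Unset Strict Implicit. Unset Printing Implicit Defensive.
Local Open Scope ring_scope.

(* Fix a causal ordering theta of G; one exists since ranking the vertices by
   their number of ancestors is compatible with ancestry.  In the theta-order B
   is strictly lower triangular, hence nilpotent, and (I - B)^-1 is unitriangular.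
   If theta u < theta v, then pi_{u,v} = 0, and 0 lies in hat C_alpha as soon as
   theta is in hat Theta.  If theta v < theta u, then pr_theta(v) is a valid
   adjustment set: writing Y = (I - B)^-1 eps, the error of a predictor
   sum_i c_i Y_i of Y_u supported on {v} u pr_theta(v) loads pi_{u,v} - c_v on
   eps_v, and subtracting (c_v - pi_{u,v}) times row v of I - B from c kills
   that loading, keeps the others and stays in the support; so a least-squares
   c has c_v = pi_{u,v}.  Then pi_{u,v} lies in hat C_alpha as soon as theta is
   in hat Theta and pi_{u,v} in C(pr_theta(v)), and the Bonferroni bound
   P(A n B) >= P(A) + P(B) - 1 survives lim inf. *)

Lemma rank_perm (p : nat) (f : 'I_p -> nat) : injective f ->
  exists theta : {perm 'I_p}, forall z w, (f z < f w)%N -> (theta z < theta w)%N.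
Proof.
move=> f_inj; pose below w := [set y | (f y < f w)%N].
have card_below w : (#|below w| < p)%N.
  rewrite -[X in (_ < X)%N]card_ord -cardsT; apply: proper_card; rewrite finset.properT.
  by apply/negP => /eqP below_full; move: (finset.in_setT w); rewrite -below_full inE ltnn.
pose g w := Ordinal (card_below w).
have g_mono z w : (f z < f w)%N -> (g z < g w)%N.
  move=> lt_zw; apply: proper_card; apply/properP; split.
    by apply/fintype.subsetP => y; rewrite !inE => /ltn_trans; apply.
  by exists z; rewrite !inE ?ltnn.
have g_inj : injective g.
  move=> z w eq_g; apply: f_inj; case: (ltngtP (f z) (f w)) => // /g_mono;
    by rewrite eq_g ltnn.
by exists (perm g_inj) => z w; rewrite !permE; apply: g_mono.
Qed.

Lemma acyclic_connect_antisym (p : nat) (E : rel 'I_p) z w : acyclic E ->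
  connect E z w -> connect E w z -> z = w.
Proof.
move=> E_acyclic /connectP[[|z' s] /= path_zw -> //] c_wz.
case/andP: path_zw => E_zz' path_z'w.
have c_z'w : connect E z' (last z' s) by apply/connectP; exists s.
by move: (E_acyclic _ _ E_zz'); rewrite (connect_trans c_z'w c_wz).
Qed.

Lemma exists_causal_ordering (p : nat) (E : rel 'I_p) : acyclic E ->
  exists theta : {perm 'I_p}, causal_ordering E theta.
Proof.
move=> E_acyclic; pose nanc w := #|[set z | connect E z w]|.
pose f w := (nanc w * p + w)%N.
have f_inj : injective f.
  by move=> z w /(congr1 (modn^~ p)); rewrite /f !modnMDl !modn_small // => /val_inj.
have [theta theta_mono] := rank_perm f_inj.
exists theta => w z lt_wz; apply/negP => c_zw.
have [eq_zw|ne_zw] := eqVneq z w; first by rewrite eq_zw ltnn in lt_wz.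
suff /theta_mono : (f z < f w)%N by rewrite ltnNge ltnW.
have : (nanc z < nanc w)%N.
  apply: proper_card; apply/properP; split.
    by apply/fintype.subsetP => y; rewrite !inE => /connect_trans; apply.
  exists w; rewrite !inE ?connect0 //; apply: contraNN ne_zw => c_wz; apply/eqP.
  exact: (acyclic_connect_antisym E_acyclic c_zw c_wz).
rewrite /f; have := ltn_ord z; have := ltn_ord w; nia.
Qed.

Lemma causal_ordering_coef_lt (R : nmodType) (p : nat) (E : rel 'I_p) (B : 'M[R]_p)
  (theta : {perm 'I_p}) : acyclic E -> (forall v w, ~~ E w v -> B v w = 0) ->
  causal_ordering E theta -> forall i j, B i j != 0 -> (theta j < theta i)%N.
Proof.
move=> E_acyclic B_supp theta_causal i j; apply: contraNT => le_ij.
have E_ji : E j i = false.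
  apply/negP => E_ji; move: le_ij; rewrite -leqNgt leq_eqVlt => /orP[/eqP|lt_ij].
    by move/val_inj/perm_inj => eq_ij; move: (E_acyclic _ _ E_ji); rewrite eq_ij connect0.
  by move: (theta_causal _ _ lt_ij); rewrite /ancestor connect1.
by rewrite B_supp ?E_ji.
Qed.

Lemma pr_subset_setC2 (p : nat) (theta : {perm 'I_p}) u v :
  (theta v < theta u)%N -> pr theta v \subset ~: [set u; v].
Proof.
move=> lt_vu; apply/fintype.subsetP => w; rewrite !finset.inE negb_or => lt_wv.
by apply/andP; split; apply: contraTneq lt_wv => ->; rewrite -?leqNgt ?ltnn // ltnW.
Qed.

Section StrictlyTriangular.
Variables (R : pzRingType) (p : nat) (theta : {perm 'I_p}) (B : 'M[R]_p).
Hypothesis B_lt : forall i j, B i j != 0 -> (theta j < theta i)%N.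

Lemma strict_trig_expr_eq0 k i j : (theta i < theta j + k)%N -> (B ^+ k) i j = 0.
Proof.
elim: k i j => [|k IHk] i j lt_ij.
  by rewrite expr0 -idmxE mxE; case: eqP lt_ij => // ->; rewrite addn0 ltnn.
rewrite exprSr -mulmxE mxE big1 // => l _.
have [->|/B_lt lt_jl] := eqVneq (B l j) 0; first by rewrite mulr0.
by rewrite IHk ?mul0r //; lia.
Qed.

Lemma strict_trig_nilpotent : B ^+ p = 0.
Proof.
by apply/matrixP => i j; rewrite mxE strict_trig_expr_eq0 //; have := ltn_ord (theta i); lia.
Qed.

Lemma strict_trig_geometric : (1%:M - B) *m \sum_(k < p) B ^+ k = 1%:M.
Proof.
rewrite idmxE mulmxE -[1 - B]opprB mulNr -subrX1 strict_trig_nilpotent.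
by rewrite sub0r opprK.
Qed.
End StrictlyTriangular.

Section TotalEffect.
Variables (R : fieldType) (p : nat) (theta : {perm 'I_p}) (B : 'M[R]_p).
Hypothesis B_lt : forall i j, B i j != 0 -> (theta j < theta i)%N.

Lemma unitmx_subIB : 1%:M - B \in unitmx.
Proof. by case: (mulmx1_unit (strict_trig_geometric B_lt)). Qed.

Lemma invmx_subIB : invmx (1%:M - B) = \sum_(k < p) B ^+ k.
Proof. by rewrite -[RHS](mulKmx unitmx_subIB) (strict_trig_geometric B_lt) mulmx1. Qed.

Lemma total_effect_eq0 u v : (theta u < theta v)%N -> total_effect B u v = 0.
Proof.
move=> lt_uv; rewrite /total_effect invmx_subIB summxE big1 // => k _.
by rewrite (strict_trig_expr_eq0 B_lt) //; lia.
Qed.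

Lemma total_effect_id v : total_effect B v v = 1.
Proof.
have p_gt0 : (0 < p)%N by apply: leq_ltn_trans (ltn_ord v).
rewrite /total_effect invmx_subIB summxE -(big_mkord xpredT (fun k => (B ^+ k) v v)).
rewrite big_ltn // expr0 -idmxE mxE eqxx big_nat_cond big1 ?addr0 //.
move=> k /andP[/andP[k_gt0 _] _]; rewrite (strict_trig_expr_eq0 B_lt) //; lia.
Qed.
End TotalEffect.

(* Y_u - sum_i c_i Y_i = err_loadings B u c *m eps, as Y = (I - B)^-1 eps. *)
Definition err_loadings (R : fieldType) (p : nat) (B : 'M[R]_p) (u : 'I_p)
  (c : 'I_p -> R) : 'rV[R]_p :=
  (delta_mx 0 u - \row_i c i) *m invmx (1%:M - B).

Lemma err_loadingsE (R : fieldType) (p : nat) (B : 'M[R]_p) u c k :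
  err_loadings B u c 0 k = total_effect B u k - \sum_i c i * total_effect B i k.
Proof.
by rewrite /err_loadings mulmxBl -rowE !mxE; congr (_ - _); apply: eq_bigr => i _; rewrite mxE.
Qed.

Lemma pop_mse_sem_cov (R : fieldType) (p : nat) (B : 'M[R]_p) (dvar : 'I_p -> R) u c :
  pop_mse (sem_cov B dvar) u c = \sum_k dvar k * err_loadings B u c 0 k ^+ 2.
Proof.
set M := invmx (1%:M - B).
have cov_ij i j : sem_cov B dvar i j = \sum_k M i k * dvar k * M j k.
  by rewrite /sem_cov mxE; apply: eq_bigr => k _; rewrite mul_mx_diag !mxE.
rewrite /pop_mse.
under eq_bigr do under eq_bigr do rewrite cov_ij mulr_sumr mulr_suml.
under eq_bigr do rewrite exchange_big.
rewrite exchange_big; apply: eq_bigr => k _.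
rewrite !mxE expr2 mulr_suml mulr_sumr; apply: eq_bigr => i _.
rewrite !mxE mulr_sumr mulr_sumr; apply: eq_bigr => j _.
by rewrite !mxE /=; ring.
Qed.

Lemma err_loadings_shift (R : fieldType) (p : nat) (B : 'M[R]_p) u c v a k :
  1%:M - B \in unitmx ->
  err_loadings B u (fun i => c i - a * (1%:M - B) v i) 0 k =
  err_loadings B u c 0 k + a * (v == k)%:R.
Proof.
move=> IB_unit; rewrite !err_loadingsE.
have /matrixP/(_ v k) := mulmxV IB_unit; rewrite !mxE => <-.
rewrite mulr_sumr -addrA -!sumrN -big_split; congr (_ + _).
by apply: eq_bigr => i _; rewrite /total_effect /=; ring.
Qed.

Section PredecessorAdjustment.
Variables (R : realFieldType) (p : nat) (theta : {perm 'I_p}) (B : 'M[R]_p).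
Hypothesis B_lt : forall i j, B i j != 0 -> (theta j < theta i)%N.
Variables (u v : 'I_p).

Let supported (c : 'I_p -> R) := forall w, w \notin v |: pr theta v -> c w = 0.

Lemma err_loadings_at_treatment c : supported c ->
  err_loadings B u c 0 v = total_effect B u v - c v.
Proof.
move=> c_supp; rewrite err_loadingsE; congr (_ - _).
rewrite (bigD1 v) //= (total_effect_id B_lt) mulr1 big1 ?addr0 // => i ne_iv.
have [->|c_i] := eqVneq (c i) 0; first by rewrite mul0r.
have : i \in v |: pr theta v by apply: contraNT c_i => /c_supp ->.
rewrite !inE (negbTE ne_iv) => lt_iv.
by rewrite (total_effect_eq0 B_lt lt_iv) mulr0.
Qed.

Lemma supported_shift c : supported c ->
  supported (fun i => c i - (c v - total_effect B u v) * (1%:M - B) v i).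
Proof.
move=> c_supp w w_out; move: (w_out); rewrite !inE negb_or => /andP[ne_wv not_lt].
rewrite c_supp // !mxE eq_sym (negbTE ne_wv) sub0r.
have [B_vw|/B_lt lt_wv] := eqVneq (B v w) 0; first by rewrite B_vw subr0 mulr0 oppr0.
by rewrite lt_wv in not_lt.
Qed.

Lemma pr_valid_adjustment (dvar : 'I_p -> R) : 0 < dvar v ->
  valid_adjustment B dvar u v (pr theta v).
Proof.
move=> dvar_v_gt0; split=> [|b [b_supp b_min]]; first by rewrite inE ltnn.
have := b_min _ (supported_shift b_supp); rewrite !pop_mse_sem_cov.
under [X in _ <= X]eq_bigr => k _ do rewrite (err_loadings_shift _ _ _ _ _ (unitmx_subIB B_lt)).
rewrite (bigD1 v) //= [X in _ <= X](bigD1 v) //= (err_loadings_at_treatment b_supp).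
under [X in _ <= _ + X]eq_bigr => k ne_vk do rewrite eq_sym (negbTE ne_vk) mulr0 addr0.
rewrite lerD2r eqxx mulr1 -[b v - _]opprB subrr expr0n mulr0 => le_0.
apply/eqP; rewrite -subr_eq0 -sqrf_eq0 eq_le sqr_ge0 andbT.
by rewrite -(pmulr_rle0 _ dvar_v_gt0) -[_ - _]opprB sqrrN.
Qed.
End PredecessorAdjustment.

Local Open Scope classical_set_scope.

Section Liminf.
Context {R : realType}.
Local Open Scope ereal_scope.
Implicit Types a b : (\bar R)^nat.

Lemma le_limn_einf a b : (forall n, a n <= b n) -> limn_einf a <= limn_einf b.
Proof.
move=> le_ab; rewrite !limn_einf_lim; apply: lee_lim; try exact: is_cvg_einfs.
apply: nearW => n; apply: le_ereal_inf_tmp => _ [k /= le_nk <-].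
by apply: le_trans (le_ab k); apply: ereal_inf_lbound; exists k.
Qed.

Lemma limn_einfD_ge0 a b : (forall n, 0 <= a n) -> (forall n, 0 <= b n) ->
  limn_einf a + limn_einf b <= limn_einf (a \+ b).
Proof.
move=> a_ge0 b_ge0; rewrite !limn_einf_lim.
have lim_einfs_ge0 c : (forall n, 0 <= c n) -> 0 <= limn (einfs c).
  move=> c_ge0; apply: lime_ge; first exact: is_cvg_einfs.
  by apply: nearW => n; apply: le_ereal_inf_tmp => _ [k _ <-].
have einfs_def : limn (einfs a) +? limn (einfs b).
  by rewrite ge0_adde_def // inE; apply: lim_einfs_ge0.
rewrite -limeD //; try exact: is_cvg_einfs.
apply: lee_lim; [by apply: is_cvgeD => //; exact: is_cvg_einfs|exact: is_cvg_einfs|].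
apply: nearW => n; apply: le_ereal_inf_tmp => _ [k /= le_nk <-].
by apply: leeD; apply: ereal_inf_lbound; exists k.
Qed.
End Liminf.

Section Bonferroni.
Context d (T : measurableType d) (R : realType) (P : probability T R).
Local Open Scope ereal_scope.

Lemma probability_setI_bonferroni (A B : set T) : measurable A -> measurable B ->
  P A + P B <= 1 + P (A `&` B).
Proof.
move=> mA mB; rewrite (measureDI P mA mB) addeAC; apply: leeD => //.
have mAB : measurable (A `\` B) by exact: measurableD.
rewrite -measureU //; first exact/probability_le1/measurableU.
by apply/seteqP; split => x //= [[_ ?] ?].
Qed.

Lemma limn_einf_probability_setI (A B : nat -> set T) (a b : R) :
  (forall n, measurable (A n)) -> (forall n, measurable (B n)) ->
  (1 - a)%:E <= limn_einf (fun n => P (A n)) ->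
  (1 - b)%:E <= limn_einf (fun n => P (B n)) ->
  (1 - (a + b))%:E <= limn_einf (fun n => P (A n `&` B n)).
Proof.
move=> mA mB covA covB.
have : (1 - a)%:E + (1 - b)%:E <= 1 + limn_einf (fun n => P (A n `&` B n)).
  rewrite -limn_einf_shift //; apply: le_trans (leeD covA covB) _.
  apply: le_trans (limn_einfD_ge0 _ _) _ => //.
  by apply: le_limn_einf => n; apply: probability_setI_bonferroni.
by rewrite -EFinD -leeBlDl // -EFinB; congr (_ <= _); congr EFin; ring.
Qed.
End Bonferroni.

Definition adjusted_ci (R : zmodType) (p : nat) (Th : {set {perm 'I_p}})
  (CS : {set 'I_p} -> set R) (u v : 'I_p) : set R :=
  [set x | (exists2 theta, theta \in Th & (theta v < theta u)%N /\ CS (pr theta v) x)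
           \/ ((exists2 theta, theta \in Th & (theta u < theta v)%N) /\ x = 0)].

Lemma measurable_const_prop d (T : measurableType d) (c : Prop) :
  measurable [set _ : T | c].
Proof.
have [c_true|c_false] := pselect c.
  by rewrite (_ : [set _ | c] = setT) //; apply/seteqP; split.
by rewrite (_ : [set _ | c] = set0) //; apply/seteqP; split.
Qed.

Lemma measurable_adjusted_ci d (T : measurableType d) (R : zmodType) (p : nat)
  (Th : T -> {set {perm 'I_p}}) (CS : T -> {set 'I_p} -> set R) u v x :
  (forall theta, measurable [set w | theta \in Th w]) ->
  (forall S, measurable [set w | CS w S x]) ->
  measurable [set w | adjusted_ci (Th w) (CS w) u v x].
Proof.
move=> mTh mCS.
have -> : [set w | adjusted_ci (Th w) (CS w) u v x] =
    \bigcup_(theta in setT) ([set w | theta \in Th w] `&`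
      ([set _ | (theta v < theta u)%N] `&` [set w | CS w (pr theta v) x] `|`
       [set _ | (theta u < theta v)%N /\ x = 0])).
  apply/seteqP; split => w /=.
    case=> [[theta th_in [lt_vu ci]]|[[theta th_in lt_uv] x0]]; exists theta => //.
      by split=> //; left.
    by split=> //; right.
  case=> theta _ [th_in [[lt_vu ci]|[lt_uv x0]]]; first by left; exists theta.
  by right; split=> //; exists theta.
apply: fin_bigcup_measurable finite_finset _ => theta _.
apply: measurableI (mTh theta) _; apply: measurableU; last exact: measurable_const_prop.
by apply: measurableI (mCS _); apply: measurable_const_prop.
Qed.

Theorem lemma1
  (R : realType) (d : measure_display) (Omega : measurableType d)
  (P : probability Omega R)
  (p : nat) (E : rel 'I_p) (B : 'M[R]_p) (dvar : 'I_p -> R)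
  (eps : nat -> Omega -> 'cV[R]_p) (Ys : nat -> Omega -> 'cV[R]_p)
  (Thetahat : forall n : nat, ('I_n -> 'cV[R]_p) -> {set {perm 'I_p}})
  (C : forall n : nat, {set 'I_p} -> ('I_n -> 'cV[R]_p) -> set R)
  (u v : 'I_p) (alpha : R) :
  (* G is a DAG and B is supported on its edges *)
  acyclic E ->
  (forall v' w, ~~ E w v' -> B v' w = 0) ->
  (* the sample: Ys i (i = 0, 1, ...) are i.i.d. copies of Y following the
     linear SEM Y = B Y + eps with mutually independent mean-zero errors *)
  (forall i omega, Ys i omega = B *m Ys i omega + eps i omega) ->
  mutually_independent P (fun ij : nat * 'I_p => fun omega => eps ij.1 omega ij.2 ord0) ->
  (forall i j (A : set R), measurable A ->
     P ((fun omega => eps i omega j ord0) @^-1` A) =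
     P ((fun omega => eps 0%N omega j ord0) @^-1` A)) ->
  (forall i j, ('E_P[fun omega => eps i omega j ord0] = 0)%E) ->
  (forall j, 0 < dvar j) ->
  (forall i j, 'V_P[fun omega => eps i omega j ord0] = (dvar j)%:E) ->
  u != v ->
  0 < alpha < 1 ->
  (* measurability of the data-dependent events *)
  (forall n theta,
     measurable [set omega | theta \in Thetahat n (fun i : 'I_n => Ys i omega)]) ->
  (forall n S x,
     measurable [set omega | C n S (fun i : 'I_n => Ys i omega) x]) ->
  (* asymptotic coverage of the causal orderings *)
  (forall theta, causal_ordering E theta ->
     ((1 - alpha / 2)%:E <=
      limn_einf (fun n => P [set omega |
        theta \in Thetahat n (fun i : 'I_n => Ys i omega)]))%E) ->
  (* asymptotic coverage of C(S) for valid adjustment sets S *)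
  (forall S : {set 'I_p}, S \subset ~: [set u; v] ->
     valid_adjustment B dvar u v S ->
     ((1 - alpha / 2)%:E <=
      limn_einf (fun n => P [set omega |
        C n S (fun i : 'I_n => Ys i omega) (total_effect B u v)]))%E) ->
  (* conclusion: asymptotic coverage of hat C_alpha *)
  ((1 - alpha)%:E <=
   limn_einf (fun n => P [set omega |
     let Th := Thetahat n (fun i : 'I_n => Ys i omega) in
     let Chat : set R :=
       [set x | (exists2 theta, theta \in Th & (theta v < theta u)%N /\
                   C n (pr theta v) (fun i : 'I_n => Ys i omega) x)
                \/ ((exists2 theta, theta \in Th & (theta u < theta v)%N)
                    /\ x = 0%R)] in
     Chat (total_effect B u v)]))%E.
Proof.
move=> E_acyclic B_supp _ _ _ _ dvar_gt0 _ ne_uv /andP[alpha_gt0 _] mTh mC covTh covC.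
have [theta theta_causal] := exists_causal_ordering E_acyclic.
have B_lt := causal_ordering_coef_lt E_acyclic B_supp theta_causal.
set data := fun n omega (i : 'I_n) => Ys i omega.
set pi := total_effect B u v.
set CI := fun n => [set omega |
  adjusted_ci (Thetahat n (data n omega)) (fun S => C n S (data n omega)) u v pi].
change ((1 - alpha)%:E <= limn_einf (fun n => P (CI n)))%E.
have mCI n : measurable (CI n) by apply: measurable_adjusted_ci.
have [lt_uv|lt_vu] : (theta u < theta v)%N \/ (theta v < theta u)%N.
  case: ltngtP => [||/val_inj/perm_inj eq_uv]; [by left|by right|].
  by rewrite eq_uv eqxx in ne_uv.
- have pi0 : pi = 0 := total_effect_eq0 B_lt lt_uv.
  apply: le_trans (_ : (1 - alpha / 2)%:E <= _)%E; first by rewrite lee_fin; lra.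
  apply: le_trans (covTh _ theta_causal) (le_limn_einf _) => n.
  apply: le_measure; rewrite ?inE; [exact: mTh|exact: mCI|].
  by move=> omega th_in; right; split=> //; exists theta.
- set S := pr theta v.
  have covS := covC S (pr_subset_setC2 lt_vu) (pr_valid_adjustment B_lt u (dvar_gt0 v)).
  have := limn_einf_probability_setI (mTh^~ theta) (fun n => mC n S pi)
    (covTh _ theta_causal) covS.
  rewrite -splitr => /le_trans; apply; apply: le_limn_einf => n.
  apply: le_measure; rewrite ?inE; [exact: measurableI|exact: mCI|].
  by move=> omega [th_in ci]; left; exists theta.
Qed.
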